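(* Let $n\geqslant 0$ and let $W_n$ act on $\mathcal{C}^n$ via its left action on $W_n/W_{n-1}$. Then: (1) for each $k$, $W_n$ acts transitively on the set of $k$-simplices of $\mathcal{C}^n$; (2) for any $k$-simplex $C$ and any permutation $\phi$ of the vertices of $C$, there is an element of $W_n$ that maps $C$ to itself and acts on its vertices as $\phi$; (3) every simplex of $\mathcal{C}^n$ is a face of an $n$-simplex.
   Context: Standing setup: $\Gamma_1$ is an arbitrary finite Coxeter diagram with a preferred vertex $s_1$ (edge $\{s,t\}$ iff $m_{st}\geqslant3$; unlabelled edge means $m_{st}=3$, no edge means $m_{st}=2$). For $n\geqslant 2$, $\Gamma_n$ is obtained from $\Gamma_{n-1}$ by adding one new vertex $s_n$ joined by an unlabelled edge to $s_{n-1}$ and to no other vertex. $\Gamma_0$ is $\Gamma_1$ with $s_1$ deleted; $\Gamma_{-1}$ is $\Gamma_1$ with $s_1$ and all its neighbours deleted. For $n\geqslant -1$, $S_n$ is the vertex set of $\Gamma_n$ and $W_n$ the Coxeter group; $W_m$ ($m\leqslant n$) is the standard parabolic subgroup of $W_n$ generated by $S_m$. Definition of $\mathcal{C}^n$ ($n\geqslant 0$): the abstract simplicial complex with vertex set $W_n/W_{n-1}$ whose $k$-simplices ($0\leqslant k\leqslant n$) are the sets $\{c(s_{n-k+1}\cdots s_n)W_{n-1},\ \ldots,\ cs_nW_{n-1},\ cW_{n-1}\}$ for $c\in W_n$; such $c$ is called a lift of the simplex. *)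

(* Coxeter groups are given by generators and relations;
   elements are represented by words (seq of generators) modulo the
   congruence [coxeq] generated by the Coxeter relations (setoid style). *)
From mathcomp Require Import all_boot.
Set Implicit Arguments. Unset Strict Implicit. Unset Printing Implicit Defensive.

Section Coxeter.
(* Gamma_1: finite vertex set V, preferred vertex s1, Coxeter matrix m.
   Convention: m a b = 0 encodes m_{ab} = infinity (no relation). *)
Variables (V : finType) (s1 : V) (m : V -> V -> nat).

(* Generators of all Gamma_n at once: inl a = vertex a of Gamma_1,
   inr j = the tail vertex s_{j+2}. *)
Definition gen := (V + nat)%type.

(* s_i for i >= 1 (s_1 is the preferred vertex); sgen 0 is junk, never used. *)
Definition sgen (i : nat) : gen :=
  match i with 0 | 1 => inl s1 | i'.+2 => inr i' end.

(* Coxeter matrix of the union of all Gamma_n. *)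
Definition mG (x y : gen) : nat :=
  match x, y with
  | inl a, inl b => m a b
  | inr i, inr j => if i == j then 1 else if (i == j.+1) || (j == i.+1) then 3 else 2
  | inl a, inr j => if (j == 0) && (a == s1) then 3 else 2
  | inr j, inl a => if (j == 0) && (a == s1) then 3 else 2
  end.

(* Sset l = S_{l-1}, the vertex set of Gamma_{l-1} (l = 0 gives S_{-1}). *)
Definition Sset (l : nat) : pred gen :=
  fun x => match l, x with
  | 0, inl a => (a != s1) && (m s1 a == 2)   (* s1 and its neighbours deleted *)
  | 0, inr _ => false
  | 1, inl a => a != s1
  | 1, inr _ => false
  | l'.+2, inl _ => true
  | l'.+2, inr j => j.+2 <= l'.+1
  end.

Fixpoint braid (s t : gen) (k : nat) : seq gen :=
  if k is k'.+1 then s :: braid t s k' else [::].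

Inductive coxeq (P : pred gen) : seq gen -> seq gen -> Prop :=
| ce_refl w : coxeq P w w
| ce_sym w w' : coxeq P w w' -> coxeq P w' w
| ce_trans w1 w2 w3 : coxeq P w1 w2 -> coxeq P w2 w3 -> coxeq P w1 w3
| ce_ctx u v w w' : coxeq P w w' -> coxeq P (u ++ w ++ v) (u ++ w' ++ v)
| ce_inv s : P s -> coxeq P [:: s; s] [::]
| ce_braid s t : P s -> P t -> s != t -> mG s t != 0 ->
    coxeq P (braid s t (mG s t)) (braid t s (mG s t)).

(* Elements of W_n: words w with all (Sset n.+1) w, modulo coxeq (Sset n.+1).
   W_{n-1}: elements of W_n represented by words in S_{n-1}. *)
Definition inW (n : nat) (w : seq gen) := all (Sset n.+1) w.

(* x W_{n-1} = y W_{n-1} in W_n / W_{n-1}  (i.e. x^{-1} y in W_{n-1}) *)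
Definition coset_eq (n : nat) (x y : seq gen) : Prop :=
  exists w, all (Sset n) w /\ coxeq (Sset n.+1) (x ++ w) y.

Definition tword (n j : nat) : seq gen := map sgen (iota (n - j).+1 j).

Definition simplex_verts (n k : nat) (c : seq gen) : seq gen -> Prop :=
  fun x => exists j, j <= k /\ coset_eq n x (c ++ tword n j).

Definition is_simplex (n k : nat) (X : seq gen -> Prop) : Prop :=
  k <= n /\ exists c, inW n c /\
    forall x, inW n x -> (X x <-> simplex_verts n k c x).

Definition act (n : nat) (g : seq gen) (X : seq gen -> Prop) : seq gen -> Prop :=
  fun y => exists x, inW n x /\ X x /\ coset_eq n y (g ++ x).

Definition setEq (n : nat) (X Y : seq gen -> Prop) : Prop :=
  forall x, inW n x -> (X x <-> Y x).

Definition is_vperm (n : nat) (X : seq gen -> Prop) (phi : seq gen -> seq gen) : Prop :=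
  [/\ (forall x, inW n x -> X x -> inW n (phi x) /\ X (phi x)),
      (forall x y, inW n x -> inW n y -> X x -> X y ->
          (coset_eq n (phi x) (phi y) <-> coset_eq n x y))
    & (forall y, inW n y -> X y -> exists x, [/\ inW n x, X x & coset_eq n (phi x) y])].

End Coxeter.

(* Write v_i := c t_i W_{n-1} (t_i = s_{n-i+1} ... s_n, i <= k) for the vertices of
   the k-simplex with lift c.  For j < n the reflection c s_{n-j} c^-1 maps v_i to
   v_{tau(i)}, tau the transposition (j j+1): this is a computation with the braid
   relation between s_{n-j-1} and s_{n-j} and the commutation of far-apart tail
   generators.  Adjacent transpositions generate all permutations, so every
   permutation of the indices 0..k is induced by an element of W_n.  Applied to a
   permutation sending a pair {a, b} to {0, i}, this also shows that as soon as
   two vertices coincide all of them do; hence the vertices are either pairwise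
   distinct (and a vertex permutation is an index permutation) or all equal
   (and the identity works). *)
From Stdlib Require Import Classical ClassicalEpsilon.
From mathcomp Require Import all_boot zify.
Set Implicit Arguments. Unset Strict Implicit. Unset Printing Implicit Defensive.

Ltac case_ifs := repeat match goal with
 | |- context [if ?b then _ else _] =>
   lazymatch b with context [if _ then _ else _] => fail | _ =>
   let H := fresh "H" in case H: b; [move: H => /idP H | move: H => /negbT H] end
 end.

Definition swap (x y z : nat) := if z == x then y else if z == y then x else z.

Lemma swapK x y : involutive (swap x y).
Proof. by move=> z; rewrite /swap; case_ifs; lia. Qed.

Lemma swap_le x y z k : x <= k -> y <= k -> z <= k -> swap x y z <= k.
Proof. by rewrite /swap => *; case_ifs; lia. Qed.

(* [cyc j d] is the cycle j -> j+1 -> ... -> j+d -> j. *)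
Definition cyc j d i :=
  if i < j then i else if i < j + d then i.+1 else if i == j + d then j else i.

Lemma cyc_le j d i n : i <= n -> j + d <= n -> cyc j d i <= n.
Proof. by rewrite /cyc => *; case_ifs; lia. Qed.

Lemma swap_cyc j d i : swap j j.+1 (cyc j.+1 d i) = cyc j d.+1 i.
Proof. by rewrite /swap /cyc; case_ifs; lia. Qed.

Section CoxeterWords.
Variables (V : finType) (s1 : V) (m : V -> V -> nat).
Hypothesis mdiag : forall a, m a a = 1.
Variable n : nat.

Local Notation P := (Sset s1 m n.+1).
Local Notation cq := (coxeq s1 m P).
Local Notation ceq := (coset_eq s1 m n).
Local Notation sg := (sgen s1).
Local Notation tw := (tword s1 n).

Lemma coxeq_catl u w w' : cq w w' -> cq (u ++ w) (u ++ w').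
Proof. by move=> H; have := ce_ctx u [::] H; rewrite !cats0. Qed.

Lemma coxeq_catr v w w' : cq w w' -> cq (w ++ v) (w' ++ v).
Proof. by move=> H; have := ce_ctx [::] v H. Qed.

Lemma SsetS l x : Sset s1 m l x -> Sset s1 m l.+1 x.
Proof.
case: l => [|[|l]]; case: x => [a|j] //=; first by case/andP.
exact: ltnW.
Qed.

Lemma all_SsetS l w : all (Sset s1 m l) w -> all (Sset s1 m l.+1) w.
Proof. by move=> /allP H; apply/allP => x /H; apply: SsetS. Qed.

Lemma Sset_sgen l i : 0 < i -> Sset s1 m l (sg i) = (i < l).
Proof. by case: i => [|[|i]] // _; case: l => [|[|l]] //=; rewrite eqxx. Qed.

Lemma mG_diag x : mG s1 m x x = 1.
Proof. by case: x => [a|j] /=; rewrite ?mdiag ?eqxx. Qed.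

Lemma mG_sgen i j : 0 < i -> 0 < j ->
  mG s1 m (sg i) (sg j) =
  if i == j then 1 else if (i == j.+1) || (j == i.+1) then 3 else 2.
Proof.
case: i => [|[|i]] // _; case: j => [|[|j]] // _ /=.
- by rewrite mdiag.
- by rewrite eqxx andbT; case: j.
- by rewrite eqxx andbT; case: i.
Qed.

Lemma mG_sgen_far i j : 0 < i -> 0 < j -> (i.+2 <= j) || (j.+2 <= i) ->
  mG s1 m (sg i) (sg j) = 2.
Proof. by move=> hi hj h; rewrite mG_sgen //; case_ifs; lia. Qed.

Lemma mG_sgen_adj i : 0 < i -> mG s1 m (sg i.+1) (sg i) = 3.
Proof. by move=> hi; rewrite mG_sgen //; case_ifs; lia. Qed.

Lemma sgen_neq i j : 0 < i -> 0 < j -> i != j -> sg i != sg j.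
Proof.
move=> hi hj hij; apply/eqP => e.
by have := mG_sgen hi hj; rewrite (negbTE hij) e mG_diag; case: ifP.
Qed.

Lemma coxeq_rev_cat c : all P c -> cq (rev c ++ c) [::].
Proof.
elim: c => [|x c IH]; first by move=> _; apply: ce_refl.
case/andP => Px Pc; rewrite rev_cons cat_rcons.
exact: ce_trans (ce_ctx (rev c) c (ce_inv s1 m Px)) (IH Pc).
Qed.

Lemma coxeq_cat_rev c : all P c -> cq (c ++ rev c) [::].
Proof. by move=> Pc; have := @coxeq_rev_cat (rev c); rewrite revK all_rev; apply. Qed.

Lemma coxeq_commute x u : P x -> all P u ->
  (forall y, y \in u -> mG s1 m x y = 2) -> cq (x :: u) (u ++ [:: x]).
Proof.
elim: u => [|y u IH] Px /=; first by move=> *; apply: ce_refl.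
case/andP => Py Pu H.
have Hxy : mG s1 m x y = 2 by apply: H; rewrite inE eqxx.
have nxy : x != y by apply/eqP => e; move: Hxy; rewrite e mG_diag.
have B := ce_braid (s1:=s1) (m:=m) Px Py nxy; rewrite Hxy in B.
apply: ce_trans (ce_ctx [::] u (B isT)) _.
apply: (coxeq_catl [:: y]) (IH Px Pu _) => z zu.
by apply: H; rewrite inE zu orbT.
Qed.

Lemma coset_eq_refl x : ceq x x.
Proof. by exists [::]; rewrite cats0; split => //; apply: ce_refl. Qed.

Lemma coxeq_coset_eq x y : cq x y -> ceq x y.
Proof. by move=> H; exists [::]; rewrite cats0. Qed.

Lemma coset_eq_sym x y : ceq x y -> ceq y x.
Proof.
case=> w [Hw H]; exists (rev w); split; first by rewrite all_rev.
apply: ce_trans (coxeq_catr (rev w) (ce_sym H)) _.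
by rewrite -catA; have := coxeq_catl x (coxeq_cat_rev (all_SsetS Hw)); rewrite cats0.
Qed.

Lemma coset_eq_trans x y z : ceq x y -> ceq y z -> ceq x z.
Proof.
case=> w1 [H1 E1] [w2 [H2 E2]]; exists (w1 ++ w2).
by rewrite all_cat H1 H2 catA; split => //; exact: ce_trans (coxeq_catr w2 E1) E2.
Qed.

Lemma coset_eq_catl g x y : ceq x y -> ceq (g ++ x) (g ++ y).
Proof. by case=> w [Hw E]; exists w; split => //; rewrite -catA; apply: coxeq_catl. Qed.

Lemma coset_eq_cancel c d t : all P c -> ceq ((d ++ rev c) ++ (c ++ t)) (d ++ t).
Proof.
move=> Pc; apply: coxeq_coset_eq; rewrite -catA; apply: coxeq_catl.
by rewrite catA; apply: (coxeq_catr t (coxeq_rev_cat Pc)).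
Qed.

Lemma twordS j : j < n -> tw j.+1 = sg (n - j) :: tw j.
Proof. by move=> hj; rewrite /tword; have -> : (n - j.+1).+1 = n - j by lia. Qed.

Lemma tword_memP i y :
  y \in tw i -> exists z, [/\ n - i < z, z <= n - i + i & y = sg z].
Proof. by case/mapP => z; rewrite mem_iota => /andP [h1 h2] ->; exists z; split => //; lia. Qed.

Lemma all_tword i : i <= n -> all P (tw i).
Proof. by move=> hi; apply/allP => y /tword_memP [z [h1 h2 ->]]; rewrite Sset_sgen; lia. Qed.

Lemma gen_tword_below i j : i < j < n -> ceq (sg (n - j) :: tw i) (tw i).
Proof.
move=> /andP [hij hj]; apply: coset_eq_sym; exists [:: sg (n - j)].
split; first by rewrite /= Sset_sgen; lia.
apply: ce_sym; apply: coxeq_commute; first by rewrite Sset_sgen; lia.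
  by apply: all_tword; lia.
by move=> y /tword_memP [z [h1 h2 ->]]; apply: mG_sgen_far; lia.
Qed.

Lemma tword_split i j : j.+2 <= i <= n ->
  tw i = map sg (iota (n - i).+1 (i - j.+2)) ++ sg (n - j).-1 :: sg (n - j) :: tw j.
Proof.
move=> /andP [hij hi]; rewrite /tword -!map_cons -map_cat; congr map.
rewrite -{2}(subnK hij) iotaD; congr cat.
rewrite /=; have -> : (n - i).+1 + (i - j.+2) = (n - j).-1 by lia.
by have -> : (n - j).-1.+1 = n - j by lia.
Qed.

(* Braid relation s s' s = s' s s' for s = s_{n-j}, s' = s_{n-j-1}, the
   generators of the prefix of [tw i] commuting with s and those of [tw j]
   with s'. *)
Lemma gen_tword_above i j : j.+2 <= i <= n ->
  ceq (sg (n - j) :: tw i) (tw i).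
Proof.
move=> hij; have [hji hi] := andP hij; rewrite (tword_split hij).
set A := map sg _; set T := tw j; set s := sg (n - j); set s' := sg (n - j).-1.
have Ps : P s by rewrite Sset_sgen; lia.
have Ps' : P s' by rewrite Sset_sgen; lia.
have PA : all P A.
  by apply/allP => y /mapP [z]; rewrite mem_iota => /andP [h1 h2] ->; rewrite Sset_sgen; lia.
have sA : cq (s :: A) (A ++ [:: s]).
  apply: coxeq_commute => // y /mapP [z]; rewrite mem_iota => /andP [h1 h2] ->.
  by apply: mG_sgen_far; lia.
have braid3 : cq [:: s; s'; s] [:: s'; s; s'].
  have e3 : mG s1 m s s' = 3.
    rewrite /s /s'; have -> : n - j = (n - j).-1.+1 by lia.
    by apply: mG_sgen_adj; lia.
  have := ce_braid (s1:=s1) (m:=m) Ps Ps' (sgen_neq _ _ _); rewrite e3; apply; lia.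
have s'T : cq (s' :: T) (T ++ [:: s']).
  apply: coxeq_commute => //; first by apply: all_tword; lia.
  by move=> y /tword_memP [z [h1 h2 ->]]; apply: mG_sgen_far; lia.
apply: coset_eq_sym; exists [:: s']; split; first by rewrite /= Sset_sgen; lia.
apply: ce_sym; apply: ce_trans (coxeq_catr (s' :: s :: T) sA) _; rewrite -catA /=.
apply: ce_trans (coxeq_catl A (ce_ctx [::] T braid3)) _.
by have := coxeq_catl (A ++ [:: s'; s]) s'T; rewrite -!catA.
Qed.

Lemma gen_tword j i : j < n -> i <= n -> ceq (sg (n - j) :: tw i) (tw (swap j j.+1 i)).
Proof.
move=> hj hi; rewrite /swap.
case: eqP => [->|/eqP nij]; first by rewrite -twordS //; apply: coset_eq_refl.
case: eqP => [->|/eqP nij1].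
  rewrite twordS //; apply: coxeq_coset_eq.
  have Ps : P (sg (n - j)) by rewrite Sset_sgen; lia.
  by have := ce_ctx [::] (tw j) (ce_inv s1 m Ps).
have [ltij|leji] := ltnP i j; first by apply: gen_tword_below; lia.
by apply: gen_tword_above; lia.
Qed.

Section Lift.
Variable c : seq (gen V).
Hypothesis Pc : all P c.

Definition vert i := c ++ tw i.

Definition conj_gen j := c ++ sg (n - j) :: rev c.

Definition moves g (f : nat -> nat) :=
  all P g /\ forall i, i <= n -> ceq (g ++ vert i) (vert (f i)).

Lemma all_vert i : i <= n -> all P (vert i).
Proof. by move=> hi; rewrite all_cat Pc all_tword. Qed.

Lemma moves_nil : moves [::] id.
Proof. by split => // i _; apply: coset_eq_refl. Qed.

Lemma moves_cat g1 g2 f1 f2 : (forall i, i <= n -> f2 i <= n) ->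
  moves g1 f1 -> moves g2 f2 -> moves (g1 ++ g2) (f1 \o f2).
Proof.
move=> f2n [P1 H1] [P2 H2]; split; first by rewrite all_cat P1 P2.
move=> i hi; rewrite -catA.
exact: coset_eq_trans (coset_eq_catl g1 (H2 i hi)) (H1 _ (f2n i hi)).
Qed.

Lemma moves_eq g f f' : moves g f -> (forall i, i <= n -> f i = f' i) -> moves g f'.
Proof. by move=> [Pg H] ff'; split => // i hi; rewrite -ff' //; apply: H. Qed.

Lemma moves_conj_gen j : j < n -> moves (conj_gen j) (swap j j.+1).
Proof.
move=> hj; split.
  rewrite all_cat Pc; apply/andP; split => //; apply/andP.
  split; last exact: etrans (all_rev _ _) Pc.
  by rewrite Sset_sgen; lia.
move=> i hi; rewrite /conj_gen /vert.
apply: coset_eq_trans (coset_eq_catl c (gen_tword hj hi)).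
apply: coxeq_coset_eq; rewrite -catA /=; apply: coxeq_catl.
by have := coxeq_catl [:: sg (n - j)] (coxeq_catr (tw i) (coxeq_rev_cat Pc)); rewrite -catA.
Qed.

Fixpoint cycle_word j d := if d is d'.+1 then conj_gen j ++ cycle_word j.+1 d' else [::].

Lemma moves_cycle_word j d : j + d <= n -> moves (cycle_word j d) (cyc j d).
Proof.
elim: d j => [|d IH] j hjd.
  by apply: (moves_eq moves_nil) => i _; rewrite /cyc; case_ifs; lia.
apply: (moves_eq _ (fun i _ => swap_cyc j d i)).
apply: moves_cat; [move=> i hi; apply: cyc_le; lia | apply: moves_conj_gen; lia |].
by apply: IH; lia.
Qed.

(* Induction on [k]: [p] is [cyc (p k.+1) _] composed with an injection of
   [0..k] into itself. *)
Lemma moves_perm k p : k <= n ->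
  (forall i, i <= k -> p i <= k) ->
  (forall x y, x <= k -> y <= k -> p x = p y -> x = y) ->
  exists g, moves g (fun i => if i <= k then p i else i).
Proof.
elim: k p => [|k IH] p hk pk pinj.
  exists [::]; apply: (moves_eq moves_nil) => i _.
  case: ifP => // hi0; have -> : i = 0 by lia.
  by have := pk 0 isT; lia.
set j := p k.+1; set d := k.+1 - j.
have hjd : j + d = k.+1 by have := pk k.+1 (leqnn _); rewrite /d; lia.
pose unc y := if y < j then y else y.-1.
have pj : forall i, i <= k -> p i != j.
  by move=> i hi; apply/eqP => e; have := pinj i k.+1; rewrite e => /(_ _ _ erefl); lia.
have cyc_unc : forall y, y <= k.+1 -> y != j -> cyc j d (unc y) = y.
  by move=> y hy /eqP hyj; rewrite /cyc /unc; case_ifs; lia.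
have [g' Hg'] : exists g, moves g (fun i => if i <= k then unc (p i) else i).
  apply: IH; first lia.
    by move=> i hi; have := pk i (leqW hi); have := pj i hi; rewrite /unc; case: ifP => /= *; lia.
  move=> x y hx hy e; apply: pinj; try lia.
  by rewrite -(cyc_unc (p x)) ?e ?cyc_unc ?pj ?pk //; apply: leqW.
have unc_le i : i <= n -> (if i <= k then unc (p i) else i) <= n.
  case: ifP => // h _; have := pk i (leqW h); rewrite /unc; case: ifP => *; lia.
have Hcyc := moves_cycle_word (j := j) (d := d) (leq_trans (eq_leq hjd) hk).
exists (cycle_word j d ++ g'); apply: (moves_eq (moves_cat unc_le Hcyc Hg')) => i hi /=.
case: (ltngtP i k.+1) => h.
- by rewrite ifT ?cyc_unc ?pk ?pj //; lia.
- by rewrite !ifF /cyc; case_ifs; lia.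
- by rewrite h ltnn /cyc; case_ifs; lia.
Qed.

Lemma vert_collapse k a b : k <= n -> a <= k -> b <= k -> a != b ->
  ceq (vert a) (vert b) -> forall i, i <= k -> ceq (vert i) (vert 0).
Proof.
move=> hk ha hb /eqP nab hab i hi.
have [->|ipos] := posnP i; first exact: coset_eq_refl.
(* [p] sends [a] to [0] and [b] to [i]. *)
pose p z := swap (swap a 0 b) i (swap a 0 z).
have [g [Pg Hg]] : exists g, moves g (fun z => if z <= k then p z else z).
  apply: moves_perm => //.
    by move=> z hz; rewrite /p; do 2 apply: swap_le => //; lia.
  by move=> x y _ _ /(congr1 (swap (swap a 0 b) i))/(congr1 (swap a 0)); rewrite !swapK.
have Ha := Hg a (leq_trans ha hk); rewrite ha in Ha.
have Hb := Hg b (leq_trans hb hk); rewrite hb in Hb.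
have pa : p a = 0 by rewrite /p /swap; case_ifs; lia.
have pb : p b = i by rewrite /p /swap; case_ifs; lia.
rewrite pa in Ha; rewrite pb in Hb.
exact: coset_eq_trans (coset_eq_sym Hb) (coset_eq_trans (coset_eq_catl g (coset_eq_sym hab)) Ha).
Qed.

End Lift.

Lemma simplex_transitive k X Y : is_simplex s1 m n k X -> is_simplex s1 m n k Y ->
  exists g, inW s1 m n g /\ setEq s1 m n (act s1 m n g X) Y.
Proof.
case=> hk [c [Pc HX]] [_ [d [Pd HY]]]; rewrite /inW in Pc Pd.
exists (d ++ rev c); split; first by rewrite /inW all_cat all_rev Pc Pd.
move=> y Py; rewrite HY //; split.
- case=> x [Px [/(HX x Px) [j [hj Hx]] Hy]]; exists j; split => //.
  exact: coset_eq_trans Hy (coset_eq_trans (coset_eq_catl _ Hx) (coset_eq_cancel _ _ Pc)).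
- case=> j [hj Hy]; have Pv : inW s1 m n (vert c j) by apply: all_vert; lia.
  exists (vert c j); split => //; split.
    by apply/HX => //; exists j; split => //; apply: coset_eq_refl.
  exact: coset_eq_trans Hy (coset_eq_sym (coset_eq_cancel _ _ Pc)).
Qed.

Lemma simplex_face_top k X : is_simplex s1 m n k X ->
  exists Y, is_simplex s1 m n n Y /\ forall x, inW s1 m n x -> X x -> Y x.
Proof.
case=> hk [c [Pc HX]]; exists (simplex_verts s1 m n n c).
split; first by split => //; exists c; split => // x _.
by move=> x Px /(HX x Px) [j [hj H]]; exists j; split => //; lia.
Qed.

Section VertexPermutation.
Variables (k : nat) (c : seq (gen V)) (X : seq (gen V) -> Prop) (phi : seq (gen V) -> seq (gen V)).
Hypotheses (hk : k <= n) (Pc : all P c).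
Hypothesis HX : forall x, all P x -> (X x <-> simplex_verts s1 m n k c x).
Hypothesis phi_in : forall x, all P x -> X x -> all P (phi x) /\ X (phi x).
Hypothesis phi_inj : forall x y, all P x -> all P y -> X x -> X y ->
  ceq (phi x) (phi y) <-> ceq x y.
Hypothesis phi_onto : forall y, all P y -> X y -> exists x, [/\ all P x, X x & ceq (phi x) y].

Lemma X_vert i : i <= k -> X (vert c i).
Proof.
move=> hi; apply/HX; first by apply: all_vert; lia.
by exists i; split => //; apply: coset_eq_refl.
Qed.

Lemma phi_vert i : i <= k -> exists2 j, j <= k & ceq (phi (vert c i)) (vert c j).
Proof.
move=> hi; have [Pv Xv] := phi_in (all_vert Pc (leq_trans hi hk)) (X_vert hi).
by have [j [hj Hj]] := (HX Pv).1 Xv; exists j.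
Qed.

Lemma vperm_on_verts : exists g, all P g /\
  forall i, i <= k -> ceq (g ++ vert c i) (phi (vert c i)).
Proof.
have Pv i : i <= k -> all P (vert c i) by move=> hi; apply: all_vert; lia.
have [Hall|Hnot] := classic (forall i, i <= k -> ceq (vert c i) (vert c 0)).
  exists [::]; split => // i hi; have [j hj Hj] := phi_vert hi.
  exact: coset_eq_trans (Hall i hi) (coset_eq_trans (coset_eq_sym (Hall j hj)) (coset_eq_sym Hj)).
have vert_inj a b : a <= k -> b <= k -> ceq (vert c a) (vert c b) -> a = b.
  move=> ha hb hab; apply: NNPP => nab; apply: Hnot.
  by apply: (vert_collapse Pc hk ha hb _ hab); apply/eqP.
have ex i : exists j, i <= k -> j <= k /\ ceq (phi (vert c i)) (vert c j).
  have [hi|hi] := leqP i k; last by exists 0 => h; lia.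
  by have [j hj Hj] := phi_vert hi; exists j.
pose p i := proj1_sig (constructive_indefinite_description _ (ex i)).
have hp i : i <= k -> p i <= k /\ ceq (phi (vert c i)) (vert c (p i)).
  by rewrite /p; case: constructive_indefinite_description.
have [g [Pg Hg]] : exists g, moves c g (fun i => if i <= k then p i else i).
  apply: moves_perm => // [i hi|x y hx hy e]; first exact: (hp i hi).1.
  apply: vert_inj => //; apply: ((phi_inj (Pv x hx) (Pv y hy) (X_vert hx) (X_vert hy)).1).
  by apply: coset_eq_trans (hp x hx).2 _; rewrite e; apply: coset_eq_sym (hp y hy).2.
exists g; split => // i hi; have := Hg i (leq_trans hi hk); rewrite hi => H.
exact: coset_eq_trans H (coset_eq_sym (hp i hi).2).
Qed.

Lemma vperm_induced : exists g, [/\ inW s1 m n g, setEq s1 m n (act s1 m n g X) X &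
  forall x, inW s1 m n x -> X x -> ceq (g ++ x) (phi x)].
Proof.
have [g [Pg Hg]] := vperm_on_verts.
have Hgx x : all P x -> X x -> ceq (g ++ x) (phi x).
  move=> Px Xx; have [i [hi Hx]] := (HX Px).1 Xx.
  have Pv : all P (vert c i) by apply: all_vert; lia.
  apply: coset_eq_trans (coset_eq_catl g Hx) (coset_eq_trans (Hg i hi) _).
  exact: (phi_inj Pv Px (X_vert hi) Xx).2 (coset_eq_sym Hx).
exists g; split => // y Py; split.
- case=> x [Px [Xx Hy]]; have [Pphx Xphx] := phi_in Px Xx.
  have [j [hj Hj]] := (HX Pphx).1 Xphx.
  apply/(HX Py); exists j; split => //.
  exact: coset_eq_trans Hy (coset_eq_trans (Hgx x Px Xx) Hj).
- move=> Xy; have [x [Px Xx Hx]] := phi_onto Py Xy.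
  exists x; split => //; split => //.
  exact: coset_eq_sym (coset_eq_trans (Hgx x Px Xx) Hx).
Qed.

End VertexPermutation.

End CoxeterWords.

Theorem lemma6p1 (V : finType) (s1 : V) (m : V -> V -> nat)
  (msym : forall a b, m a b = m b a)
  (mdiag : forall a, m a a = 1)
  (moff : forall a b, a != b -> m a b != 1)
  (n : nat) :
  (* (1) transitivity on k-simplices *)
  (forall k X Y, is_simplex s1 m n k X -> is_simplex s1 m n k Y ->
     exists g, inW s1 m n g /\ setEq s1 m n (act s1 m n g X) Y) /\
  (* (2) every permutation of the vertices of a simplex is induced *)
  (forall k X, is_simplex s1 m n k X ->
     forall phi, is_vperm s1 m n X phi ->
     exists g, [/\ inW s1 m n g, setEq s1 m n (act s1 m n g X) X &
       forall x, inW s1 m n x -> X x -> coset_eq s1 m n (g ++ x) (phi x)]) /\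
  (* (3) every simplex is a face of an n-simplex *)
  (forall k X, is_simplex s1 m n k X ->
     exists Y, is_simplex s1 m n n Y /\
       forall x, inW s1 m n x -> X x -> Y x).
Proof.
split; first exact: simplex_transitive.
split; last exact: simplex_face_top.
move=> k X [hk [c [Pc HX]]] phi [phi_in phi_inj phi_onto].
exact: (vperm_induced mdiag hk Pc HX phi_in phi_inj phi_onto).
Qed.
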